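(* Let $G=(V,E)$ have $|V|=2$ (i.e. $G$ is the path $\mathcal P_2$), let $N=3$, $\varepsilon\in[0,\frac12]$, $\gamma\in(0,1)$ and $s_0\in S_{nc}$. Then $\Gamma_3(G|s_0,\gamma,\varepsilon)$ admits a positional trigger strategies profile $\bar\sigma$ (which is then unique) if and only if $\varepsilon\in[0,\frac12)$ and $\gamma\in\left[\sqrt{\frac{\varepsilon}{1-\varepsilon}},\frac{1}{2-2\varepsilon}\right]$.
   Context: Setting. $G=(V,E)$ is a finite, simple, connected, undirected graph; $N\ge 3$ is an integer; $\gamma\in(0,1)$ and $\varepsilon\in[0,\frac1{N-1}]$ are parameters. There are $N$ tokens: cops $C_1,\dots,C_{N-1}$ (tokens $1,\dots,N-1$) and the robber $R$ (token $N$). A state is $s=(x^1,\dots,x^N,n)$ where $x^i\in V$ is the position of token $i$ and $n\in\{1,\dots,N\}$ is the token that moves next; $S^n$ denotes the set of states with token $n$ to move. A state is a capture state if $x^i=x^N$ for some $i\le N-1$; $S_{nc}$ is the set of noncapture states. In each turn exactly one token, the one to move, moves to a vertex of its closed neighbourhood (it may stay put); the order of moves is $C_1,C_2,\dots,C_{N-1},R,C_1,\dots$. Starting from an initial state $s_0\in S_{nc}$ at time $0$, the capture time is the first time $t$ at which a capture state occurs (infinite if never); after capture the game is over. Auxiliary games. For $m\in\{1,\dots,N\}$, $\Gamma_N^m(G|s_0,\gamma,\varepsilon)$ is the two-player zero-sum game in which player $P_m$ controls token $m$ and player $P_{-m}$ controls all other tokens, with the following payoff to $P_m$ ($P_{-m}$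 receives its negative): $0$ if no capture ever occurs; if capture occurs at time $t$: for $m=N$, $-\gamma^t$; for $m\le N-1$, $\frac{1-\varepsilon}{K}\gamma^t$ if exactly $K\in\{1,\dots,N-2\}$ cops, including $C_m$, are on the robber's vertex, $\frac{\varepsilon}{N-K-1}\gamma^t$ if exactly $K\in\{1,\dots,N-2\}$ cops, not including $C_m$, are on the robber's vertex, and $\frac{\gamma^t}{N-1}$ if all $N-1$ cops are on the robber's vertex. $\Gamma^N_N$ is the modified cops-and-robber (CR) game. A pure positional strategy for token $n$ maps each state in $S^n\cap S_{nc}$ to an allowed next vertex. Each $\Gamma^m_N$ has optimal pure positional strategies (optimal from every initial state). For $m,n\in\{1,\dots,N\}$, $\phi^n_m$ denotes the strategy of token $n$ in a chosen pair of optimal pure positional strategies of $\Gamma^m_N$ (so $\phi^m_m$ is $P_m$'s optimal strategy and $(\phi^n_m)_{n\ne m}$ is $P_{-m}$'s). $\widehat\Sigma^n$ is the set of pure positional strategies of token $n$ that are components of optimal strategy pairs of $\Gamma^N_N$ (CR-optimal strategies). Trigger strategies. Given a choice of $(\phi^n_m)_{n,m}$, the trigger strategies profile $\bar\sigma=(\bar\sigma^1,\dots,\bar\sigma^N)$ of the $N$-player SCAR game $\Gamma_N(G|s_0,\gamma,\varepsilon)$ (same board and moves; player $n$ controls token $n$) is: token $n$, at current state $s$, plays $\phi^n_n(s)$ as long as every other player $m$ has followed $\phi^m_m$, and plays $\phi^n_m(s)$ from the moment a player $m\neq n$ deviates from $\phi^m_m$. Different choices of the optimal strategies give different trigger strategies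 profiles. $\bar\sigma$ is called positional if for all $n,m\in\{1,\dots,N\}$ there is $\widehat\sigma^n\in\widehat\Sigma^n$ with $\phi^n_m(s)=\widehat\sigma^n(s)$ for every state $s\in S^n\cap S_{nc}$ reachable from $s_0$ by a finite sequence of legal moves passing only through noncapture states; otherwise $\bar\sigma$ is nonpositional. *)

From Stdlib Require Import Reals ClassicalEpsilon.
From mathcomp Require Import ssreflect ssrfun ssrbool eqtype ssrnat seq choice.
From mathcomp Require Import fintype finfun finset fingraph.

Set Implicit Arguments.
Unset Strict Implicit.
Unset Printing Implicit Defensive.

(* The paper's number of tokens N is represented as n.+1:
   tokens are the elements of 'I_n.+1; tokens 0,...,n-1 are the cops
   C_1,...,C_n (paper's tokens 1..N-1) and token ord_max (= n) is the robber R
   (paper's token N). *)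

Section SCAR.
Variables (V : finType) (e : rel V) (n : nat).

Definition simple_connected_graph : Prop :=
  symmetric e /\ irreflexive e /\ (forall x y : V, connect e x y).

Definition cnbr (x y : V) : bool := (x == y) || e x y.

Definition token := 'I_n.+1.
Definition robber : token := ord_max.

Definition state := ({ffun token -> V} * token)%type.

Definition pos (s : state) (i : token) : V := s.1 i.
Definition mover (s : state) : token := s.2.

Definition is_capture (s : state) : bool :=
  [exists i : token, (i != robber) && (pos s i == pos s robber)].

Definition cops_on (s : state) : {set token} :=
  [set i : token | (i != robber) && (pos s i == pos s robber)].

Definition move (s : state) (v : V) : state :=
  ([ffun i => if i == mover s then v else pos s i], ordS (mover s)).

(* pure (history-dependent) strategies: past history -> current state -> next vertex;
   pure positional strategies: state -> next vertex *)
Definition hstrat := seq state -> state -> V.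
Definition pstrat := state -> V.
Definition hpos (f : pstrat) : hstrat := fun _ s => f s.

Definition legal_h (i : token) (f : hstrat) : Prop :=
  forall h s, mover s = i -> ~~ is_capture s -> cnbr (pos s i) (f h s).
Definition legal_p (i : token) (f : pstrat) : Prop :=
  forall s, mover s = i -> ~~ is_capture s -> cnbr (pos s i) (f s).

Fixpoint run (P : token -> hstrat) (s0 : state) (t : nat) : seq state * state :=
  match t with
  | 0 => ([::], s0)
  | t'.+1 => let hs := run P s0 t' in
             if is_capture hs.2 then hs
             else (rcons hs.1 hs.2, move hs.2 (P (mover hs.2) hs.1 hs.2))
  end.

Definition state_at P s0 t : state := (run P s0 t).2.

Section Payoff.
Variables (gamma eps : R).

Definition coef (m : token) (s : state) : R :=
  let K := #|cops_on s| in
  if m == robber then (-1)%R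
  else if K == n then (/ INR n)%R
  else if m \in cops_on s then ((1 - eps) / INR K)%R
  else (eps / INR (n - K))%R.

Definition payoff (m : token) (P : token -> hstrat) (s0 : state) : R :=
  match excluded_middle_informative
          (exists t, [pred t | is_capture (state_at P s0 t)] t) with
  | left H => let t := ex_minn H in (gamma ^ t * coef m (state_at P s0 t))%R
  | right _ => 0%R
  end.

Definition upd (P : token -> hstrat) (m : token) (f : hstrat) : token -> hstrat :=
  fun i => if i == m then f else P i.

(* phi : token -> pstrat is a pair of optimal pure positional strategies of
   Gamma^m_N (phi m for P_m, (phi i)_{i<>m} for P_{-m}), optimal from every
   initial noncapture state, against all pure strategies. *)
Definition optimal_pair (m : token) (phi : token -> pstrat) : Prop :=
  (forall i, legal_p i (phi i)) /\
  forall s0 : state, ~~ is_capture s0 ->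
    (forall f : hstrat, legal_h m f ->
        (payoff m (upd (fun i => hpos (phi i)) m f) s0 <=
         payoff m (fun i => hpos (phi i)) s0)%R) /\
    (forall Q : token -> hstrat, (forall i, i != m -> legal_h i (Q i)) ->
        (payoff m (fun i => hpos (phi i)) s0 <=
         payoff m (upd Q m (hpos (phi m))) s0)%R).

(* CR-optimal strategies of token i (components of optimal pairs of Gamma^N_N),
   as strategies on S^i ∩ S_nc *)
Definition CR_optimal (i : token) (f : pstrat) : Prop :=
  exists phi, optimal_pair robber phi /\
    forall s, mover s = i -> ~~ is_capture s -> phi i s = f s.

Inductive reachable (s0 : state) : state -> Prop :=
| reach0 : reachable s0 s0
| reachS s v : reachable s0 s -> ~~ is_capture s -> cnbr (pos s (mover s)) v ->
               reachable s0 (move s v).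

(* a choice of optimal strategies phi m i = phi^i_m, defining a trigger profile *)
Definition trigger_choice (phi : token -> token -> pstrat) : Prop :=
  forall m, optimal_pair m (phi m).

Definition positional_trigger (s0 : state) (phi : token -> token -> pstrat) : Prop :=
  trigger_choice phi /\
  forall i m : token, exists f, CR_optimal i f /\
    forall s, reachable s0 s -> mover s = i -> ~~ is_capture s -> phi m i s = f s.

End Payoff.
End SCAR.

(* On the path with two vertices a noncapture state is determined by the
   vertex [c] of the two cops, the vertex [r] of the robber and the mover;
   the mover either stays, passing the turn on, or jumps to the other vertex,
   which ends the game.  Every payoff is therefore computed by a one-step
   recursion (discount by gamma and shift the history), and optimality in the
   cops-and-robber game forces "chasing": a cop captures at once and the
   robber stays put.  A positional trigger profile must prescribe chasing on
   every reachable state, so it exists iff chasing is a saddle point of each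
   auxiliary game.  Unrolling at most three moves, for a cop [m] this amounts
   to two inequalities: the other cop prefers capturing now to letting [m]
   capture three moves later, [eps <= (1 - eps) gamma^2], and the robber
   prefers waiting for [m] to jumping onto both cops,
   [(1 - eps) gamma^2 <= gamma / 2]; together they are the stated interval. *)

From Stdlib Require Import Reals Lra ClassicalEpsilon.
From mathcomp Require Import ssreflect ssrfun ssrbool eqtype ssrnat seq.
From mathcomp Require Import fintype finfun finset fingraph.

Set Implicit Arguments.
Unset Strict Implicit.
Unset Printing Implicit Defensive.

Local Open Scope R_scope.

Section Recursion.
Variables (V : finType) (n : nat) (gamma eps : R).

Definition shift_profile (P : token n -> hstrat V n) (s : state V n) :
    token n -> hstrat V n :=
  fun j h => P j (s :: h).

Definition next_state (P : token n -> hstrat V n) (s : state V n) : state V n :=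
  move s (P (mover s) [::] s).

Lemma run_shift (P : token n -> hstrat V n) (s : state V n) t :
  ~~ is_capture s ->
  run P s t.+1 = (s :: (run (shift_profile P s) (next_state P s) t).1,
                  (run (shift_profile P s) (next_state P s) t).2).
Proof.
move=> ns; elim: t => [|t IH]; first by rewrite /= (negbTE ns).
by rewrite [LHS]/= -/(run P s t.+1) IH /=; case: ifP.
Qed.

Lemma state_at_shift (P : token n -> hstrat V n) (s : state V n) t :
  ~~ is_capture s ->
  state_at P s t.+1 = state_at (shift_profile P s) (next_state P s) t.
Proof. by move=> ns; rewrite /state_at run_shift. Qed.

Lemma payoff_capture (m : token n) (P : token n -> hstrat V n) (s : state V n) :
  is_capture s -> payoff gamma eps m P s = coef eps m s.
Proof.
move=> cs; rewrite /payoff; case: excluded_middle_informative => [H|[]]; last by exists 0%nat.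
case: ex_minnP => t _ /(_ 0%nat cs); rewrite leqn0 => /eqP ->.
by rewrite /= Rmult_1_l.
Qed.

Lemma payoff_step (m : token n) (P : token n -> hstrat V n) (s : state V n) :
  ~~ is_capture s ->
  payoff gamma eps m P s =
  gamma * payoff gamma eps m (shift_profile P s) (next_state P s).
Proof.
move=> ns; have shiftE t := @state_at_shift P s t ns.
rewrite /payoff.
case: (excluded_middle_informative (exists t, is_capture (state_at P s t)))
  => [H|nH]; case: excluded_middle_informative => [H'|nH'].
- case: ex_minnP => -[|t] /= Ht Hmin; first by rewrite (negbTE ns) in Ht.
  case: ex_minnP => t' /= Ht' Hmin'.
  rewrite shiftE in Ht.
  have le_t't := Hmin' t Ht.
  have le_tt' : (t < t'.+1)%N by apply: Hmin; rewrite /= shiftE.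
  have -> : t = t' by apply/eqP; rewrite eqn_leq le_t't andbT -ltnS.
  by rewrite shiftE /=; ring.
- exfalso; case: H => -[|t] Ht; first by rewrite /= (negbTE ns) in Ht.
  by apply: nH'; exists t; rewrite /= -shiftE.
- by case: nH; case: H' => t Ht; exists t.+1; rewrite shiftE.
- by ring.
Qed.

Lemma robber_payoff_ge (P : token n -> hstrat V n) (s : state V n) :
  0 <= gamma <= 1 -> -1 <= payoff gamma eps (robber n) P s.
Proof.
move=> g01; rewrite /payoff; case: excluded_middle_informative => [H|_]; last lra.
rewrite /coef eqxx.
have := pow_le gamma (ex_minn H) (proj1 g01).
have : gamma ^ ex_minn H <= 1 by rewrite -(pow1 (ex_minn H)); apply: pow_incr.
lra.
Qed.

End Recursion.

Section TwoVertexBoard.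
Variables (V : finType) (e : rel V).
Hypotheses (card_V : #|V| = 2%N) (graph_e : simple_connected_graph e).

Local Notation rob := (robber 2).
Definition cop0 : 'I_3 := ord0.
Definition cop1 : 'I_3 := Ordinal (isT : (1 < 3)%N).

Lemma token_cases (j : 'I_3) : [\/ j = cop0, j = cop1 | j = rob].
Proof. by case: j => -[|[|[|//]]] lt_j; [apply: Or31|apply: Or32|apply: Or33]; apply/val_inj. Qed.

Lemma tokenE : ((cop0 == rob) = false) * ((cop1 == rob) = false) *
  ((rob == cop0) = false) * ((rob == cop1) = false) *
  ((cop0 == cop1) = false) * ((cop1 == cop0) = false).
Proof. by []. Qed.

Lemma ordS_cop0 : ordS cop0 = cop1. Proof. exact/val_inj. Qed.
Lemma ordS_cop1 : ordS cop1 = rob. Proof. exact/val_inj. Qed.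
Lemma ordS_robber : ordS rob = cop0. Proof. exact/val_inj. Qed.

Lemma vertex_cases (x y v : V) : x != y -> v = x \/ v = y.
Proof.
move=> xy; case: (eqVneq v x) => [|vx]; first by left.
case: (eqVneq v y) => [|vy]; first by right.
have uniq_xyv : uniq [:: x; y; v] by rewrite /= !inE negb_or xy eq_sym vx eq_sym vy.
by have := max_card (mem [:: x; y; v]); rewrite (card_uniqP uniq_xyv) card_V.
Qed.

Lemma edge_neq (x y : V) : x != y -> e x y.
Proof.
move=> xy; case: graph_e => _ [irr conn].
have /connectP [[|z p] /= xp lst] := conn x y; first by rewrite lst eqxx in xy.
case/andP: xp => exz _; case: (vertex_cases z xy) => [zx|<- //].
by rewrite zx irr in exz.
Qed.

(* The only noncapture positions: both cops on one vertex, the robber on the other. *)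
Definition board (c r : V) (i : 'I_3) : state V 2 :=
  ([ffun j => if j == rob then r else c], i).

Lemma pos_board c r i j : pos (board c r i) j = if j == rob then r else c.
Proof. by rewrite /pos ffunE. Qed.

Lemma mover_board c r i : mover (board c r i) = i.
Proof. by []. Qed.

Lemma board_noncapture c r i : c != r -> ~~ is_capture (board c r i).
Proof.
move=> cr; apply/existsPn => j; rewrite !pos_board eqxx.
by case: ifP; rewrite ?andbF // (negbTE cr) andbF.
Qed.

Lemma noncapture_board (s : state V 2) : ~~ is_capture s ->
  pos s cop0 != pos s rob /\ s = board (pos s cop0) (pos s rob) (mover s).
Proof.
case: s => f i /existsPn nc; have nc0 := nc cop0; have nc1 := nc cop1.
rewrite /= /pos /= in nc0 nc1 *; split=> //; congr pair; apply/ffunP => j.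
rewrite ffunE; case: (token_cases j) => -> //=.
by case: (vertex_cases (f cop1) nc0) => // f1; rewrite f1 eqxx in nc1.
Qed.

Definition stay_vertex (c r : V) (i : 'I_3) : V := if i == rob then r else c.
Definition jump_vertex (c r : V) (i : 'I_3) : V := if i == rob then c else r.

(* the payoff coefficient of [P_m] when the mover [i] jumps, so that the
   capture is made by cop [i] alone, or by both cops if [i] is the robber *)
Definition capture_coef (eps : R) (m i : 'I_3) : R :=
  if m == rob then -1 else if i == rob then / 2 else if m == i then 1 - eps else eps.

Lemma move_stay c r i : move (board c r i) (stay_vertex c r i) = board c r (ordS i).
Proof.
rewrite /move /board /stay_vertex /=; congr pair; apply/ffunP => j; rewrite !ffunE.
by case: (eqVneq j i) => [->|]; rewrite /mover /pos /= ?ffunE.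
Qed.

Lemma cops_on_jump c r i : c != r ->
  cops_on (move (board c r i) (jump_vertex c r i)) =
  if i == rob then [set cop0; cop1] else [set i].
Proof.
move=> cr; apply/setP => j; rewrite /cops_on /move /jump_vertex /pos /= in_set !ffunE /=.
by case: (token_cases i) => ->; case: (token_cases j) => ->;
  rewrite ?in_set1 ?in_set2 ?tokenE ?eqxx ?(negbTE cr) // eq_sym (negbTE cr).
Qed.

Lemma jump_capture c r i : c != r -> is_capture (move (board c r i) (jump_vertex c r i)).
Proof.
move=> cr; have : cop0 \in cops_on (move (board c r i) (jump_vertex c r i)) \/
                   i \in cops_on (move (board c r i) (jump_vertex c r i)).
  by rewrite cops_on_jump //; case: ifP => _; [left; rewrite in_set2 eqxx | right; rewrite in_set1].
by rewrite !in_set => -[] Hj; apply/existsP; eexists; exact: Hj.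
Qed.

Lemma coef_jump eps c r m i : c != r ->
  coef eps m (move (board c r i) (jump_vertex c r i)) = capture_coef eps m i.
Proof.
move=> cr; rewrite /coef /capture_coef cops_on_jump //.
have card01 : #|[set cop0; cop1]| = 2%N by rewrite cards2.
by case: (token_cases i) => ->; case: (token_cases m) => ->;
  rewrite ?card01 ?cards1 ?tokenE ?eqxx ?in_set1 ?tokenE /=; field.
Qed.

Definition chase : pstrat V 2 := fun s => pos s rob.

Definition chases (c r : V) (P : 'I_3 -> hstrat V 2) (j : 'I_3) : Prop :=
  forall h, P j h (board c r j) = r.

Section Payoffs.
Variables (gamma eps : R) (c r : V).
Hypothesis cr : c != r.

Lemma payoff_board_stay m (P : 'I_3 -> hstrat V 2) i :
  P i [::] (board c r i) = stay_vertex c r i ->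
  payoff gamma eps m P (board c r i) =
  gamma * payoff gamma eps m (shift_profile P (board c r i)) (board c r (ordS i)).
Proof. by move=> stay; rewrite payoff_step ?board_noncapture // /next_state stay move_stay. Qed.

Lemma payoff_board_jump m (P : 'I_3 -> hstrat V 2) i :
  P i [::] (board c r i) != stay_vertex c r i ->
  payoff gamma eps m P (board c r i) = gamma * capture_coef eps m i.
Proof.
move=> jump; rewrite payoff_step ?board_noncapture // /next_state.
have -> : P i [::] (board c r i) = jump_vertex c r i.
  move: jump; rewrite /stay_vertex /jump_vertex.
  by case: (vertex_cases (P i [::] (board c r i)) cr) => ->; case: ifP; rewrite ?eqxx.
by rewrite payoff_capture ?jump_capture ?coef_jump.
Qed.

Lemma chases_shift (P : 'I_3 -> hstrat V 2) j s :
  chases c r P j -> chases c r (shift_profile P s) j.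
Proof. by move=> chP h; apply: chP. Qed.

Lemma payoff_cop_chases m (P : 'I_3 -> hstrat V 2) i : i != rob -> chases c r P i ->
  payoff gamma eps m P (board c r i) = gamma * capture_coef eps m i.
Proof.
by move=> i_cop chP; apply: payoff_board_jump; rewrite chP /stay_vertex (negbTE i_cop) eq_sym.
Qed.

Lemma payoff_robber_chases m (P : 'I_3 -> hstrat V 2) : chases c r P rob ->
  payoff gamma eps m P (board c r rob) =
  gamma * payoff gamma eps m (shift_profile P (board c r rob)) (board c r cop0).
Proof. by move=> chP; rewrite payoff_board_stay -?ordS_robber // chP /stay_vertex eqxx. Qed.

Lemma robber_payoff_board_ge (P : 'I_3 -> hstrat V 2) i : 0 < gamma < 1 ->
  - gamma <= payoff gamma eps rob P (board c r i).
Proof.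
move=> g01; case: (eqVneq (P i [::] (board c r i)) (stay_vertex c r i)) => [stay|jump].
- rewrite payoff_board_stay //.
  have g01' : 0 <= gamma <= 1 by lra.
  have := robber_payoff_ge eps (shift_profile P (board c r i)) (board c r (ordS i)) g01'.
  nra.
- rewrite payoff_board_jump // /capture_coef /=; lra.
Qed.

End Payoffs.

Section ChaseValues.
Variables (gamma eps : R) (c r : V).
Hypotheses (cr : c != r) (gamma01 : 0 < gamma < 1).

Definition upper_value (m i : 'I_3) (w : R) : Prop :=
  forall P, (forall j, j != m -> chases c r P j) -> payoff gamma eps m P (board c r i) <= w.

Definition lower_value (m i : 'I_3) (w : R) : Prop :=
  forall P, chases c r P m -> w <= payoff gamma eps m P (board c r i).

Lemma upper_step m i v w : upper_value m (ordS i) v ->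
  gamma * capture_coef eps m i <= w -> gamma * v <= w -> upper_value m i w.
Proof.
move=> up jump_le stay_le P chP.
case: (eqVneq (P i [::] (board c r i)) (stay_vertex c r i)) => [stay|jump].
- rewrite payoff_board_stay //.
  have := up _ (fun j jm => chases_shift (board c r i) (chP j jm)); nra.
- by rewrite payoff_board_jump.
Qed.

Lemma lower_step m i v w : lower_value m (ordS i) v ->
  w <= gamma * capture_coef eps m i -> w <= gamma * v -> lower_value m i w.
Proof.
move=> lo jump_ge stay_ge P chP.
case: (eqVneq (P i [::] (board c r i)) (stay_vertex c r i)) => [stay|jump].
- rewrite payoff_board_stay //.
  have := lo _ (chases_shift (board c r i) chP); nra.
- by rewrite payoff_board_jump.
Qed.

Lemma upper_cop_chases m i w : i != m -> i != rob ->
  gamma * capture_coef eps m i <= w -> upper_value m i w.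
Proof. by move=> im i_cop le_w P chP; rewrite (payoff_cop_chases _ _ cr _ i_cop (chP i im)). Qed.

Lemma lower_cop_chases m w : m != rob ->
  w <= gamma * capture_coef eps m m -> lower_value m m w.
Proof. by move=> m_cop le_w P chP; rewrite payoff_cop_chases. Qed.

Lemma upper_robber_chases m v w : rob != m -> upper_value m cop0 v ->
  gamma * v <= w -> upper_value m rob w.
Proof.
move=> rm up le_w P chP; rewrite (payoff_robber_chases _ _ cr _ (chP rob rm)).
have := up _ (fun j jm => chases_shift (board c r rob) (chP j jm)); nra.
Qed.

Lemma lower_robber_chases v w : lower_value rob cop0 v ->
  w <= gamma * v -> lower_value rob rob w.
Proof.
move=> lo le_w P chP; rewrite payoff_robber_chases //.
have := lo _ (chases_shift (board c r rob) chP); nra.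
Qed.

Lemma lower_robber_any i w : w <= - gamma -> lower_value rob i w.
Proof. by move=> le_w P _; have := robber_payoff_board_ge eps cr P i gamma01; lra. Qed.

Definition saddle_value m i v := upper_value m i v /\ lower_value m i v.

Hypotheses (eps01 : 0 <= eps <= 1 / 2)
  (cond_lazy : eps <= (1 - eps) * gamma ^ 2)
  (cond_jump : (1 - eps) * gamma ^ 2 <= gamma / 2).

Lemma cop0_saddle i : exists v, saddle_value cop0 i v.
Proof.
have U1 : upper_value cop0 cop1 (gamma * eps).
  by apply: upper_cop_chases => //; rewrite /capture_coef /=; lra.
have U0 : upper_value cop0 cop0 (gamma * (1 - eps)).
  by apply: (upper_step (v := gamma * eps)); rewrite ?ordS_cop0 // /capture_coef /=; nra.
have L0 : lower_value cop0 cop0 (gamma * (1 - eps)).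
  by apply: lower_cop_chases => //; rewrite /capture_coef /=; lra.
have L2 : lower_value cop0 rob (gamma ^ 2 * (1 - eps)).
  by apply: (lower_step (v := gamma * (1 - eps))); rewrite ?ordS_robber // /capture_coef /=; nra.
have L1 : lower_value cop0 cop1 (gamma * eps).
  by apply: (lower_step (v := gamma ^ 2 * (1 - eps))); rewrite ?ordS_cop1 // /capture_coef /=; nra.
case: (token_cases i) => ->;
  [exists (gamma * (1 - eps)) | exists (gamma * eps) | exists (gamma ^ 2 * (1 - eps))] => //.
by split=> //; apply: (upper_robber_chases (v := gamma * (1 - eps))) => //=; lra.
Qed.

Lemma cop1_saddle i : exists v, saddle_value cop1 i v.
Proof.
have U0 : upper_value cop1 cop0 (gamma * eps).
  by apply: upper_cop_chases => //; rewrite /capture_coef /=; lra.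
have U2 : upper_value cop1 rob (gamma ^ 2 * eps).
  by apply: (upper_robber_chases (v := gamma * eps)) => //=; lra.
have U1 : upper_value cop1 cop1 (gamma * (1 - eps)).
  by apply: (upper_step (v := gamma ^ 2 * eps)); rewrite ?ordS_cop1 // /capture_coef /=; nra.
have L1 : lower_value cop1 cop1 (gamma * (1 - eps)).
  by apply: lower_cop_chases => //; rewrite /capture_coef /=; lra.
have L0 : lower_value cop1 cop0 (gamma * eps).
  by apply: (lower_step (v := gamma * (1 - eps))); rewrite ?ordS_cop0 // /capture_coef /=; nra.
have L2 : lower_value cop1 rob (gamma ^ 2 * eps).
  by apply: (lower_step (v := gamma * eps)); rewrite ?ordS_robber // /capture_coef /=; nra.
by case: (token_cases i) => ->;
  [exists (gamma * eps) | exists (gamma * (1 - eps)) | exists (gamma ^ 2 * eps)].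
Qed.

Lemma robber_saddle i : exists v, saddle_value rob i v.
Proof.
have U0 : upper_value rob cop0 (- gamma).
  by apply: upper_cop_chases => //; rewrite /capture_coef /=; lra.
have U1 : upper_value rob cop1 (- gamma).
  by apply: upper_cop_chases => //; rewrite /capture_coef /=; lra.
have U2 : upper_value rob rob (- gamma ^ 2).
  by apply: (upper_step (v := - gamma)); rewrite ?ordS_robber // /capture_coef /=; nra.
have L0 : lower_value rob cop0 (- gamma) by apply: lower_robber_any; lra.
have L2 : lower_value rob rob (- gamma ^ 2).
  by apply: (lower_robber_chases (v := - gamma)) => //=; lra.
case: (token_cases i) => ->; [exists (- gamma) | exists (- gamma) | exists (- gamma ^ 2)] => //.
by split=> //; apply: lower_robber_any; lra.
Qed.

Lemma chase_saddle m i : exists v, saddle_value m i v.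
Proof.
by case: (token_cases m) => ->; [exact: cop0_saddle | exact: cop1_saddle | exact: robber_saddle].
Qed.

End ChaseValues.

Lemma legal_chase i : legal_p e i chase.
Proof.
move=> s _ /existsPn /(_ i) nc; rewrite /cnbr /chase.
case: (eqVneq i rob) => [->|i_cop]; first by rewrite eqxx.
by rewrite edge_neq ?orbT //; rewrite i_cop in nc.
Qed.

Lemma chase_optimal gamma eps m : 0 < gamma < 1 -> 0 <= eps <= 1 / 2 ->
  eps <= (1 - eps) * gamma ^ 2 -> (1 - eps) * gamma ^ 2 <= gamma / 2 ->
  optimal_pair e gamma eps m (fun _ => chase).
Proof.
move=> g01 e01 lazy jump; split=> [i|s /noncapture_board [+ ->]]; first exact: legal_chase.
move: (pos s cop0) (pos s rob) (mover s) => c r i cr.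
have [v [up lo]] := chase_saddle cr g01 e01 lazy jump m i.
have chase_chases j : chases c r (fun=> hpos chase) j.
  by move=> h; rewrite /hpos /chase pos_board eqxx.
split=> [f _ | Q _].
- apply: Rle_trans (up _ _) (lo _ (chase_chases m)) => j jm h.
  by rewrite /upd (negbTE jm) chase_chases.
- apply: Rle_trans (up _ (fun j _ => chase_chases j)) (lo _ _) => h.
  by rewrite /upd eqxx chase_chases.
Qed.

Lemma CR_optimal_chases gamma eps (phi : 'I_3 -> pstrat V 2) (s : state V 2) :
  0 < gamma < 1 -> optimal_pair e gamma eps rob phi -> ~~ is_capture s ->
  phi (mover s) s = pos s rob.
Proof.
move=> g01 [_ opt] ns; have [dev punish] := opt s ns.
have [cr E] := noncapture_board ns; rewrite E mover_board pos_board eqxx in dev punish *.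
move: (pos s cop0) (pos s rob) (mover s) cr dev punish => c r i cr dev punish.
set P := fun j => hpos (phi j).
have robber_ge := robber_payoff_board_ge eps cr _ _ g01.
case: (vertex_cases (phi i (board c r i)) cr) => [stay|//]; exfalso.
case: (eqVneq i rob) => [i_rob|i_cop].
- have := dev (hpos chase) (fun _ => @legal_chase rob); subst i.
  have chP : chases c r (upd P rob (hpos chase)) rob.
    by move=> h; rewrite /upd eqxx /hpos /chase pos_board eqxx.
  have jump : P rob [::] (board c r rob) != stay_vertex c r rob.
    by rewrite /P /hpos stay /stay_vertex eqxx.
  rewrite (payoff_board_jump _ _ cr _ jump) (payoff_robber_chases _ _ cr _ chP) /capture_coef /=.
  have := robber_ge (shift_profile (upd P rob (hpos chase)) (board c r rob)) cop0.
  move: (payoff _ _ _ _ _) => x; nra.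
- have := punish (fun=> hpos chase) (fun j _ _ => @legal_chase j).
  have chP : chases c r (upd (fun=> hpos chase) rob (hpos (phi rob))) i.
    by move=> h; rewrite /upd (negbTE i_cop) /hpos /chase pos_board eqxx.
  rewrite (payoff_cop_chases _ _ cr _ i_cop chP).
  have stay_i : P i [::] (board c r i) = stay_vertex c r i.
    by rewrite /P /hpos stay /stay_vertex (negbTE i_cop).
  rewrite (payoff_board_stay _ _ cr _ stay_i) /capture_coef /=.
  have := robber_ge (shift_profile P (board c r i)) (ordS i).
  move: (payoff _ _ _ _ _) => x; nra.
Qed.

Lemma positional_trigger_chases gamma eps s0 phi m (s : state V 2) :
  0 < gamma < 1 -> positional_trigger e gamma eps s0 phi ->
  reachable e s0 s -> ~~ is_capture s -> phi m (mover s) s = pos s rob.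
Proof.
move=> g01 [_ agree_CR] s0s ns.
have [f [[phi' [opt' phi'f]] phif]] := agree_CR (mover s) m.
by rewrite phif // -phi'f // (CR_optimal_chases g01 opt').
Qed.

Lemma board_reachable c r i j : c != r -> reachable e (board c r i) (board c r j).
Proof.
move=> cr; have reach_next k : reachable e (board c r i) (board c r k) ->
    reachable e (board c r i) (board c r (ordS k)).
  move=> reach_k; rewrite -move_stay; apply: reachS => //; first exact: board_noncapture.
  by rewrite mover_board pos_board /stay_vertex /cnbr; case: ifP; rewrite eqxx.
have R0 := reach0 e (board c r i); have R1 := reach_next _ R0; have R2 := reach_next _ R1.
by case: (token_cases i) => Ei; rewrite Ei ?(ordS_cop0, ordS_cop1, ordS_robber) in R0 R1 R2 *;
  case: (token_cases j) => ->.
Qed.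

Lemma positional_trigger_conditions gamma eps phi c r i0 :
  0 < gamma < 1 -> c != r -> positional_trigger e gamma eps (board c r i0) phi ->
  eps <= (1 - eps) * gamma ^ 2 /\ (1 - eps) * gamma ^ 2 <= gamma / 2.
Proof.
move=> g01 cr pt; set P := fun j => hpos (phi cop0 j).
have chP j : chases c r P j.
  move=> h; have := positional_trigger_chases cop0 g01 pt
    (board_reachable i0 j cr) (board_noncapture j cr).
  by rewrite mover_board pos_board eqxx.
have [_ opt] := pt.1 cop0.
have [_ punish1] := opt _ (board_noncapture cop1 cr).
have [_ punish2] := opt _ (board_noncapture rob cr).
split.
- pose lazy := fun j => hpos (fun s : state V 2 => pos s j).
  set D := upd lazy cop0 (hpos (phi cop0 cop0)).
  have chD : chases c r D cop0 by move=> h; rewrite /D /upd eqxx; apply: chP.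
  have stay1 : D cop1 [::] (board c r cop1) = stay_vertex c r cop1.
    by rewrite /D /upd tokenE /lazy /hpos pos_board tokenE.
  set D1 := shift_profile D (board c r cop1).
  have stay2 : D1 rob [::] (board c r rob) = stay_vertex c r rob.
    by rewrite /D1 /shift_profile /D /upd tokenE /lazy /hpos pos_board eqxx.
  have legal_lazy j : legal_h e j (lazy j) by move=> h s _ _; rewrite /cnbr eqxx.
  have := punish1 lazy (fun j _ => legal_lazy j).
  rewrite (payoff_cop_chases _ _ cr _ _ (chP cop1)) // (payoff_board_stay _ _ cr _ stay1) ordS_cop1.
  rewrite (payoff_board_stay _ _ cr _ stay2) ordS_robber.
  rewrite (payoff_cop_chases _ _ cr _ _ (chases_shift _ (chases_shift _ chD))) // /capture_coef /=.
  nra.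
- pose jump := fun j => hpos (fun s : state V 2 => if j == rob then pos s cop0 else pos s j).
  have legal_jump j : j != cop0 -> legal_h e j (jump j).
    move=> _ h s <- /existsPn /(_ cop0) nc; rewrite /jump /hpos /cnbr.
    case: ifP => [/eqP ->|_]; last by rewrite eqxx.
    by rewrite edge_neq ?orbT // eq_sym.
  have jump_rob :
      upd jump cop0 (hpos (phi cop0 cop0)) rob [::] (board c r rob) != stay_vertex c r rob.
    by rewrite /upd tokenE /jump /hpos eqxx pos_board tokenE /stay_vertex eqxx.
  have := punish2 jump legal_jump.
  rewrite (payoff_robber_chases _ _ cr _ (chP rob)).
  rewrite (payoff_cop_chases _ _ cr _ _ (chases_shift _ (chP cop0))) //.
  rewrite (payoff_board_jump _ _ cr _ jump_rob) /capture_coef /=.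
  nra.
Qed.

End TwoVertexBoard.

Lemma chase_conditions_iff gamma eps : 0 <= eps <= 1 / 2 -> 0 < gamma < 1 ->
  (eps <= (1 - eps) * gamma ^ 2 /\ (1 - eps) * gamma ^ 2 <= gamma / 2) <->
  (0 <= eps < 1 / 2 /\ sqrt (eps / (1 - eps)) <= gamma <= 1 / (2 - 2 * eps)).
Proof.
move=> e01 g01.
have q_ge0 : 0 <= eps / (1 - eps) by apply: Rle_mult_inv_pos; lra.
have qE : eps / (1 - eps) * (1 - eps) = eps by field; lra.
have wE : 1 / (2 - 2 * eps) * (2 - 2 * eps) = 1 by field; lra.
move: q_ge0 qE wE; set q := eps / (1 - eps); set w := 1 / (2 - 2 * eps) => q_ge0 qE wE.
have sqrt_q := sqrt_sqrt q q_ge0; have := sqrt_pos q; rewrite /= => sqrt_ge0.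
split=> [[lazy jump] | [_ [sqrt_le le_w]]].
- have gw : gamma * (2 - 2 * eps) <= 1 by nra.
  split; first nra.
  split; last nra.
  rewrite -(sqrt_square gamma); last lra.
  apply: sqrt_le_1_alt; nra.
- have gw : gamma * (2 - 2 * eps) <= 1 by nra.
  split; nra.
Qed.

Local Close Scope R_scope.

Theorem mainTheorem1 (V : finType) (e : rel V) (gamma eps : R)
  (s0 : state V 2) :
  #|V| = 2 -> simple_connected_graph e ->
  (0 <= eps <= 1/2)%R -> (0 < gamma < 1)%R -> ~~ is_capture s0 ->
  ((exists phi, positional_trigger e gamma eps s0 phi) <->
   ((0 <= eps < 1/2)%R /\
    (sqrt (eps / (1 - eps)) <= gamma <= 1 / (2 - 2 * eps))%R))
  /\
  (forall phi phi', positional_trigger e gamma eps s0 phi ->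
                    positional_trigger e gamma eps s0 phi' ->
     forall (m i : 'I_3) (s : state V 2), reachable e s0 s -> mover s = i ->
       ~~ is_capture s -> phi m i s = phi' m i s).
Proof.
move=> card_V graph_e e01 g01 ns0.
split; last first.
  move=> phi phi' pt pt' m _ s s0s <- ns.
  have chase_at := positional_trigger_chases card_V graph_e m g01.
  by rewrite (chase_at _ _ _ _ pt) // (chase_at _ _ _ _ pt').
have [cr ->] := noncapture_board card_V ns0.
rewrite -chase_conditions_iff //; split=> [[phi pt] | [lazy jump]].
  exact: positional_trigger_conditions pt.
have opt m := chase_optimal card_V graph_e m g01 e01 lazy jump.
exists (fun _ _ => @chase V); split=> // i m.
by exists (@chase V); split=> //; exists (fun _ => @chase V).
Qed.
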